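(* Let $\mathcal C=(C,\chi,\ell)$ be a simplicial model, $X\in C$ any simplex, and $\varphi\in\mathcal L_K(\chi(X),P|\chi(X))$, where $P|\chi(X)=\bigcup_{a\in\chi(X)}P_a$. Then $\mathcal C,X\models_{lr}\varphi$ iff $\mathcal C,X\models_{mp}\varphi$.
   Context: Fix a finite set $A$ of agents and pairwise disjoint sets $P_a$ ($a\in A$) of local variables, with $P=\bigcup_{a\in A}P_a$. A simplicial complex $C$ on vertex set $\mathcal V(C)$ is a set of nonempty finite subsets (simplices) of $\mathcal V(C)$ closed under nonempty subsets and containing all singletons; maximal simplices are facets, $\mathcal F(C)$. A simplicial model $\mathcal C=(C,\chi,\ell)$ consists of such $C$, a colouring $\chi:\mathcal V(C)\to A$ such that every facet contains exactly one vertex of each colour, and $\ell:\mathcal V(C)\to\mathcal P(P)$ with $\ell(v)\subseteq P_{\chi(v)}$. For a simplex $X$: $\chi(X)=\{\chi(v):v\in X\}$, $\ell(X)=\bigcup_{v\in X}\ell(v)$. For $B\subseteq A$ and $Q\subseteq P$, $\mathcal L_K(B,Q)$ is given by $\varphi::=p\mid\neg\varphi\mid\varphi\wedge\varphi\mid K_a\varphi$ with $p\in Q$, $a\in B$. Facet semantics: $\mathcal C,X\models p$ iff $p\in\ell(X)$; negation, conjunction classical; $\mathcal C,X\models K_a\varphi$ iff $\mathcal C,Y\models\varphi$ for all $Y\in\mathcal F(C)$ with $a\in\chi(X\cap Y)$. Multi-pointed local semantics: for any simplex $Y\in C$, $\mathcal C,Y\models_{mp}\varphi$ iff $\mathcal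 C,Z\models\varphi$ (facet semantics) for all facets $Z\in\mathcal F(C)$ with $Y\subseteq Z$. Language-restricted local semantics: for a simplex $X$ and $\varphi\in\mathcal L_K(\chi(X),P|\chi(X))$, defined by induction: $\mathcal C,X\models_{lr}p_a$ iff $p_a\in\ell(X)$; $\neg$ and $\wedge$ classical; $\mathcal C,X\models_{lr}K_a\varphi$ iff $\mathcal C,Y\models_{lr}\varphi$ for all simplices $Y\in C$ with $\chi(Y)=\chi(X)$ and $a\in\chi(X\cap Y)$. *)

From mathcomp Require Import all_boot.
Set Implicit Arguments. Unset Strict Implicit. Unset Printing Implicit Defensive.

Inductive form (A Pv : Type) : Type :=
  | fVar : Pv -> form A Pv
  | fNeg : form A Pv -> form A Pv
  | fAnd : form A Pv -> form A Pv -> form A Pv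
  | fK   : A -> form A Pv -> form A Pv.
Arguments fVar {A Pv}. Arguments fNeg {A Pv}. Arguments fAnd {A Pv}. Arguments fK {A Pv}.

Fixpoint in_lang (A : finType) (Pv : Type) (B : {set A}) (Q : Pv -> bool)
    (phi : form A Pv) : bool :=
  match phi with
  | fVar p => Q p
  | fNeg psi => in_lang B Q psi
  | fAnd psi1 psi2 => in_lang B Q psi1 && in_lang B Q psi2
  | fK a psi => (a \in B) && in_lang B Q psi
  end.

Section Simplicial.
Variables (A : finType) (Pv : Type) (owner : Pv -> A).
(* owner p = a  means  p \in P_a ; the P_a are thus pairwise disjoint, P = Pv. *)
Variables (V : finType) (C : {set {set V}}) (col : V -> A) (lab : V -> Pv -> bool).

Definition is_facet (X : {set V}) : Prop :=
  X \in C /\ forall Y : {set V}, Y \in C -> X \subset Y -> Y = X.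

Definition is_simplicial_complex : Prop :=
  [/\ forall X : {set V}, X \in C -> X != set0,
      forall X Y : {set V}, X \in C -> Y \subset X -> Y != set0 -> Y \in C
    & forall v, [set v] \in C].

Definition is_simplicial_model : Prop :=
  [/\ is_simplicial_complex,
      forall Z : {set V}, is_facet Z -> forall a : A, #|[set v in Z | col v == a]| = 1
    & forall v p, lab v p -> owner p = col v].

Definition colset (X : {set V}) : {set A} := [set col v | v in X].

Definition localvars (X : {set V}) : Pv -> bool := fun p => owner p \in colset X.

Definition ell_has (X : {set V}) (p : Pv) : Prop := exists2 v, v \in X & lab v p.

Definition shares (a : A) (X Y : {set V}) : Prop := exists2 v, v \in X :&: Y & col v = a.

Fixpoint sat (X : {set V}) (phi : form A Pv) : Prop :=
  match phi with
  | fVar p => ell_has X p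
  | fNeg psi => ~ sat X psi
  | fAnd psi1 psi2 => sat X psi1 /\ sat X psi2
  | fK a psi => forall Y : {set V}, is_facet Y -> shares a X Y -> sat Y psi
  end.

Definition sat_mp (Y : {set V}) (phi : form A Pv) : Prop :=
  forall Z : {set V}, is_facet Z -> Y \subset Z -> sat Z phi.

Fixpoint sat_lr (X : {set V}) (phi : form A Pv) : Prop :=
  match phi with
  | fVar p => ell_has X p
  | fNeg psi => ~ sat_lr X psi
  | fAnd psi1 psi2 => sat_lr X psi1 /\ sat_lr X psi2
  | fK a psi => forall Y : {set V}, Y \in C -> colset Y = colset X -> shares a X Y -> sat_lr Y psi
  end.

End Simplicial.

From mathcomp Require Import all_boot.
Set Implicit Arguments. Unset Strict Implicit. Unset Printing Implicit Defensive.

(* Fix the colour set B = chi(X) and extend X to any facet Z.  A formula of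
   L_K(B, P|B) cannot tell Z from X: a variable of P_b (b in B) can only be
   labelled at the b-vertex of Z, which lies in X; and for a in B, a facet W
   meets Z in colour a iff it meets X there, iff its B-coloured face meets X
   there.  So by induction the facet truth at Z coincides with the
   language-restricted truth at X, which makes facet truth the same at every
   facet containing X. *)

Section LocalSemantics.
Variables (A : finType) (Pv : Type) (owner : Pv -> A).
Variables (V : finType) (C : {set {set V}}) (col : V -> A) (lab : V -> Pv -> bool).
Hypothesis model : is_simplicial_model owner C col lab.

Lemma simplex_sub_facet (Y : {set V}) :
  Y \in C -> exists2 Z, is_facet C Z & Y \subset Z.
Proof.
move=> YC; have YY : (Y \in C) && (Y \subset Y) by rewrite YC subxx.
have [Z /andP[ZC sYZ] Zmax] :=
  @arg_maxnP _ Y (fun Z => (Z \in C) && (Y \subset Z)) (fun Z => #|Z|) YY.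
exists Z => //; split=> // W WC sZW; apply/eqP; rewrite eq_sym eqEcard sZW.
by apply: Zmax; rewrite WC (subset_trans sYZ sZW).
Qed.

Lemma facet_col_inj (Z : {set V}) : is_facet C Z -> {in Z &, injective col}.
Proof.
case: model => _ colZ _ FZ u w uZ wZ cuw.
have /eqP/cards1P[x Zx] := colZ Z FZ (col u).
have : u \in [set v in Z | col v == col u] by rewrite inE uZ eqxx.
have : w \in [set v in Z | col v == col u] by rewrite inE wZ cuw eqxx.
by rewrite Zx !inE => /eqP -> /eqP ->.
Qed.

Lemma facet_col_onto (Z : {set V}) (b : A) :
  is_facet C Z -> exists2 w, w \in Z & col w = b.
Proof.
case: model => _ colZ _ FZ; have /eqP/cards1P[x Zx] := colZ Z FZ b.
have : x \in [set v in Z | col v == b] by rewrite Zx set11.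
by rewrite inE => /andP[xZ /eqP]; exists x.
Qed.

Definition col_face (B : {set A}) (W : {set V}) : {set V} :=
  [set w in W | col w \in B].

Lemma col_face_sub (B : {set A}) (W : {set V}) : col_face B W \subset W.
Proof. by apply/subsetP => w; rewrite inE => /andP[]. Qed.

Lemma col_face_simplex (B : {set A}) (W : {set V}) :
  is_facet C W -> B != set0 -> col_face B W \in C.
Proof.
move=> FW /set0Pn[b bB]; case: model => -[_ faceC _] _ _.
apply: (faceC W); [by case: FW | exact: col_face_sub |].
have [w wW cw] := facet_col_onto b FW.
by apply/set0Pn; exists w; rewrite inE wW cw.
Qed.

Lemma colset_col_face (B : {set A}) (W : {set V}) :
  is_facet C W -> colset col (col_face B W) = B.
Proof.
move=> FW; apply/setP => b; apply/imsetP/idP => [[w] | bB].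
  by rewrite inE => /andP[_ wB] ->.
by have [w wW cw] := facet_col_onto b FW; exists w; rewrite // inE wW cw.
Qed.

Lemma sharesS (a : A) (X X' Y Y' : {set V}) :
  X \subset X' -> Y \subset Y' -> shares col a X Y -> shares col a X' Y'.
Proof.
move=> sXX' sYY' [v /setIP[vX vY] cv]; exists v => //.
by rewrite inE (subsetP sXX') ?(subsetP sYY').
Qed.

Lemma shares_col_face (a : A) (B : {set A}) (X W : {set V}) :
  a \in B -> shares col a X W -> shares col a X (col_face B W).
Proof. by move=> aB [v /setIP[vX vW] cv]; exists v; rewrite // !inE vX vW cv. Qed.

Lemma shares_facet_sub (a : A) (X Z W : {set V}) :
  is_facet C Z -> X \subset Z -> a \in colset col X ->
  shares col a Z W -> shares col a X W.
Proof.
move=> FZ sXZ /imsetP[x xX ->] [v /setIP[vZ vW] cv].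
exists x => //; rewrite inE xX.
by rewrite -(facet_col_inj FZ vZ (subsetP sXZ x xX) cv).
Qed.

Lemma ell_has_facet (X Z : {set V}) (p : Pv) :
  is_facet C Z -> X \subset Z -> owner p \in colset col X ->
  ell_has lab Z p <-> ell_has lab X p.
Proof.
move=> FZ sXZ /imsetP[x xX ox]; split=> -[v vZ lv]; exists v => //.
  case: model => _ _ ownerP.
  by rewrite (facet_col_inj FZ vZ (subsetP sXZ x xX)) // -ox (ownerP _ _ lv).
exact: (subsetP sXZ).
Qed.

Lemma sat_facet_lr (B : {set A}) (phi : form A Pv) :
  in_lang B (fun p => owner p \in B) phi ->
  forall X Z, X \in C -> colset col X = B -> is_facet C Z -> X \subset Z ->
  sat C col lab Z phi <-> sat_lr C col lab X phi.
Proof.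
elim: phi => [p | psi IH | psi1 IH1 psi2 IH2 | a psi IH] /= phiB X Z XC cX FZ sXZ.
- by apply: ell_has_facet; rewrite ?cX.
- by have := IH phiB X Z XC cX FZ sXZ; tauto.
- case/andP: phiB => /IH1 eqv1 /IH2 eqv2.
  by have := eqv1 X Z XC cX FZ sXZ; have := eqv2 X Z XC cX FZ sXZ; tauto.
case/andP: phiB => aB psiB.
split=> [satZ Y YC cY shXY | satX W FW shZW].
  have [W FW sYW] := simplex_sub_facet YC.
  by apply/(IH psiB Y W) => //; [rewrite cY | apply: satZ (sharesS sXZ sYW shXY)].
have shXW : shares col a X W by apply: shares_facet_sub shZW; rewrite ?cX.
have faceC : col_face B W \in C by apply: col_face_simplex FW _; apply/set0Pn; exists a.
apply/(IH psiB _ W faceC (colset_col_face B FW) FW (col_face_sub B W)).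
by apply: satX faceC _ (shares_col_face aB shXW); rewrite colset_col_face.
Qed.

End LocalSemantics.

Theorem mainTheorem6 (A : finType) (Pv : Type) (owner : Pv -> A)
    (V : finType) (C : {set {set V}}) (col : V -> A) (lab : V -> Pv -> bool) :
  is_simplicial_model owner C col lab ->
  forall (X : {set V}) (phi : form A Pv),
    X \in C ->
    in_lang (colset col X) (localvars owner col X) phi ->
    (sat_lr C col lab X phi <-> sat_mp C col lab X phi).
Proof.
move=> model X phi XC phiX.
have satZ := sat_facet_lr model phiX XC erefl.
split=> [satX Z FZ sXZ | satmp]; first by apply/satZ.
by have [Z FZ sXZ] := simplex_sub_facet XC; apply/(satZ Z) => //; apply: satmp.
Qed.
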